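(* Let $\ell\in\mathbb{N}$, let $G$ be an $\ell$-tuple regular finite group and let $N$ be a subgroup of $G$ that is a union of order classes. Then $N$ is $\ell$-tuple regular.
   Context: A subgroup $N$ of $G$ is a union of order classes if for every $n\in\mathbb{N}$ it contains either all or none of the elements of order $n$ of $G$. For $\ell\in\mathbb{N}$, a finite group $G$ is $\ell$-tuple regular if for all tuples $(g_1,\ldots,g_\ell),(h_1,\ldots,h_\ell)\in G^\ell$ (entries may repeat) for which $g_i\mapsto h_i$ defines an isomorphism $\langle g_1,\ldots,g_\ell\rangle\to\langle h_1,\ldots,h_\ell\rangle$, there exists a bijection $\Psi\colon G\to G$ such that for every $g\in G$ the assignment $g_1\mapsto h_1,\ldots,g_\ell\mapsto h_\ell,g\mapsto\Psi(g)$ defines an isomorphism $\langle g_1,\ldots,g_\ell,g\rangle\to\langle h_1,\ldots,h_\ell,\Psi(g)\rangle$. *)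

From mathcomp Require Import all_boot all_fingroup.
Set Implicit Arguments. Unset Strict Implicit. Unset Printing Implicit Defensive.
Local Open Scope group_scope.

Definition gen_tuple (gT : finGroupType) (n : nat) (g : 'I_n -> gT) : {set gT} :=
  <<[set g i | i : 'I_n]>>.

Definition iso_assign (gT : finGroupType) (n : nat) (g h : 'I_n -> gT) : Prop :=
  exists f : {morphism gen_tuple g >-> gT},
    isom (gen_tuple g) (gen_tuple h) f /\ forall i, f (g i) = h i.

Definition ext_tuple (gT : finGroupType) (n : nat) (g : 'I_n -> gT) (x : gT)
  : 'I_n.+1 -> gT :=
  fun i => match unlift ord_max i with Some j => g j | None => x end.

Definition tuple_regular (gT : finGroupType) (l : nat) (G : {group gT}) : Prop :=
  forall g h : 'I_l -> gT,
    (forall i, g i \in G) -> (forall i, h i \in G) ->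
    iso_assign g h ->
    exists Psi : gT -> gT,
      [/\ {in G, forall x, Psi x \in G}, {in G &, injective Psi} &
          {in G, forall x, iso_assign (ext_tuple g x) (ext_tuple h (Psi x))}].

Definition union_order_classes (gT : finGroupType) (G N : {group gT}) : Prop :=
  forall x y, x \in G -> y \in G -> #[x] = #[y] -> x \in N -> y \in N.

From mathcomp Require Import all_boot all_fingroup.

(* The bijection Psi witnessing regularity of G also works for N: since
   x |-> Psi x extends to an isomorphism, Psi x has the order of x, so Psi
   maps N into N because N is a union of order classes. *)

Set Implicit Arguments.
Unset Strict Implicit.
Unset Printing Implicit Defensive.

Local Open Scope group_scope.

Lemma ext_tuple_max (gT : finGroupType) (n : nat) (g : 'I_n -> gT) (x : gT) :
  ext_tuple g x ord_max = x.
Proof. by rewrite /ext_tuple unlift_none. Qed.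

Lemma mem_gen_tuple (gT : finGroupType) (n : nat) (g : 'I_n -> gT) (i : 'I_n) :
  g i \in gen_tuple g.
Proof. by apply: mem_gen; apply: imset_f. Qed.

Lemma iso_assign_order (gT : finGroupType) (n : nat) (g h : 'I_n -> gT) :
  iso_assign g h -> forall i, #[g i] = #[h i].
Proof.
case=> f [isof fgh] i.
by rewrite -fgh (order_injm (isom_inj isof)) ?mem_gen_tuple.
Qed.

Lemma iso_assign_ext_order (gT : finGroupType) (n : nat) (g h : 'I_n -> gT)
    (x y : gT) :
  iso_assign (ext_tuple g x) (ext_tuple h y) -> #[x] = #[y].
Proof.
by move/iso_assign_order/(_ ord_max); rewrite !ext_tuple_max.
Qed.

Theorem lemma3p2 (gT : finGroupType) (l : nat) (G N : {group gT}) :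
  tuple_regular l G -> N \subset G -> union_order_classes G N ->
  tuple_regular l N.
Proof.
move=> regG sNG classN g h gN hN isogh.
have inG x : x \in N -> x \in G by apply: (subsetP sNG).
have [Psi [PsiG injPsi isoPsi]] :=
  regG g h (fun i => inG _ (gN i)) (fun i => inG _ (hN i)) isogh.
exists Psi; split.
- move=> x xN; have xG := inG x xN.
  exact: classN (PsiG x xG) (iso_assign_ext_order (isoPsi x xG)) xN.
- by move=> x y /inG xG /inG yG; apply: injPsi.
- by move=> x /inG; apply: isoPsi.
Qed.
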